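(* Let $n\ge1$, and for $j=1,\dots,n$ let $\hat\phi_j\in\mathbb{R}$, $\tilde\phi_j\ge 0$ and $0\le\underline{\xi}_j\le\overline{\xi}_j$. For $\mathbf{x}\in\mathbb{R}^n$, $\mathbf{x}\succeq\mathbf{0}$, define the worst-case squared position error bound $$\mathcal{P}_{\mathrm R}(\mathbf{x})=\max_{\substack{\phi_j\in[\hat\phi_j-\tilde\phi_j,\,\hat\phi_j+\tilde\phi_j]\\ \xi_j\in[\underline\xi_j,\,\overline\xi_j]}}\operatorname{tr}\Big\{\Big(\sum_{j=1}^n x_j\xi_j\mathbf{u}(\phi_j)\mathbf{u}(\phi_j)^{\mathsf T}\Big)^{-1}\Big\}$$ (the trace being $+\infty$ when the matrix is singular), let $\underline{\mathbf{R}}=\operatorname{diag}\{\underline\xi_1,\dots,\underline\xi_n\}$ and $B(\mathbf{x})=\tfrac14\,\mathcal{P}_{\mathrm R}(\mathbf{x})\cdot\mathbf{1}^{\mathsf T}\underline{\mathbf{R}}\mathbf{x}$. For a positive integer $M$, let $\vartheta_m=(2m+1)\pi/M$ for $m\in\mathcal{M}=\{0,1,\dots,M-1\}$, and let $\mathbf{h}_m,\mathbf{g}_m\in\mathbb{R}^n$ have $j$th entries $$[\mathbf{h}_m]_j=\max_{|\epsilon|\le2\tilde\phi_j}\cos(2\hat\phi_j-\vartheta_m+\epsilon),\qquad [\mathbf{g}_m]_j=\frac{[\mathbf{h}_m]_j}{\cos(\pi/M)}.$$ Define $$\underline{\mathcal{P}}_M(\mathbf{x})=\max_{m\in\mathcal{M}}\frac{4\cdot\mathbf{1}^{\mathsf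 T}\underline{\mathbf{R}}\mathbf{x}}{(\mathbf{1}^{\mathsf T}\underline{\mathbf{R}}\mathbf{x})^2-(\mathbf{h}_m^{\mathsf T}\underline{\mathbf{R}}\mathbf{x})^2},\qquad \overline{\mathcal{P}}_M(\mathbf{x})=\max_{m\in\mathcal{M}}\frac{4\cdot\mathbf{1}^{\mathsf T}\underline{\mathbf{R}}\mathbf{x}}{(\mathbf{1}^{\mathsf T}\underline{\mathbf{R}}\mathbf{x})^2-(\mathbf{g}_m^{\mathsf T}\underline{\mathbf{R}}\mathbf{x})^2}.$$ Then for any $\mathbf{x}\succeq\mathbf{0}$ with $\mathcal{P}_{\mathrm R}(\mathbf{x})<\infty$ and any $M\ge\pi\sqrt{B(\mathbf{x})}$, we have $\underline{\mathcal{P}}_M(\mathbf{x})\le\mathcal{P}_{\mathrm R}(\mathbf{x})\le\overline{\mathcal{P}}_M(\mathbf{x})$.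
   Context: $\mathbf{u}(\phi)=[\cos\phi\ \ \sin\phi]^{\mathsf T}$; $\mathbf{1}$ is the all-ones vector; $\mathbf{x}\succeq\mathbf{0}$ means entrywise nonnegative. This models one agent (with one uncertainty cell) in a wireless localization network with $n$ anchors: $\phi_j$ is the agent–anchor angle known to lie in $[\hat\phi_j-\tilde\phi_j,\hat\phi_j+\tilde\phi_j]$, $\xi_j$ the equivalent ranging coefficient known to lie in $[\underline\xi_j,\overline\xi_j]$, and $\mathbf{x}$ the anchor transmit power vector. *)

From HB Require Import structures.
From mathcomp Require Import all_boot all_order all_algebra.
From mathcomp Require Import all_classical all_reals all_analysis.
Set Implicit Arguments. Unset Strict Implicit. Unset Printing Implicit Defensive.
Import Order.TTheory GRing.Theory Num.Theory.
Local Open Scope classical_set_scope.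
Local Open Scope ring_scope.

Section Defs.
Variable R : realType.

Definition uvec (phi : R) : 'cV[R]_2 :=
  \col_(i < 2) (if i == ord0 then cos phi else sin phi).

Definition EFIM (n : nat) (x phi xi : 'I_n -> R) : 'M[R]_2 :=
  \sum_(j < n) (x j * xi j) *: (uvec (phi j) *m (uvec (phi j))^T).

Definition trinv (J : 'M[R]_2) : \bar R :=
  if J \in unitmx then (\tr (invmx J))%:E else +oo%E.

Definition PR (n : nat) (phihat phitil xilo xihi x : 'I_n -> R) : \bar R :=
  ereal_sup [set t | exists (phi xi : 'I_n -> R),
     (forall j, phihat j - phitil j <= phi j <= phihat j + phitil j) /\
     (forall j, xilo j <= xi j <= xihi j) /\
     t = trinv (EFIM x phi xi)].

Definition oneRx (n : nat) (xilo x : 'I_n -> R) : R := \sum_(j < n) xilo j * x j.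

(* B(x) = 1/4 P_R(x) 1^T Rlow x  (P_R(x) finite) *)
Definition Bx (n : nat) (phihat phitil xilo xihi x : 'I_n -> R) : R :=
  4^-1 * fine (PR phihat phitil xilo xihi x) * oneRx xilo x.

Definition vartheta (M m : nat) : R := (2 * m + 1)%:R * pi / M%:R.

Definition hm (n M m : nat) (phihat phitil : 'I_n -> R) (j : 'I_n) : R :=
  sup [set cos (2 * phihat j - vartheta M m + eps) | eps in [set eps : R | `|eps| <= 2 * phitil j]].

Definition gm (n M m : nat) (phihat phitil : 'I_n -> R) (j : 'I_n) : R :=
  hm M m phihat phitil j / cos (pi / M%:R).

Definition Pterm (n : nat) (xilo x v : 'I_n -> R) : R :=
  4 * oneRx xilo x / (oneRx xilo x ^+ 2 - (\sum_(j < n) v j * xilo j * x j) ^+ 2).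

Definition Plow (n M : nat) (phihat phitil xilo x : 'I_n -> R) : \bar R :=
  \big[Order.max/-oo%E]_(m < M) (Pterm xilo x (hm M m phihat phitil))%:E.

Definition Pup (n M : nat) (phihat phitil xilo x : 'I_n -> R) : \bar R :=
  \big[Order.max/-oo%E]_(m < M) (Pterm xilo x (gm M m phihat phitil))%:E.

End Defs.

From HB Require Import structures.
From mathcomp Require Import all_boot all_order all_algebra.
From mathcomp Require Import all_classical all_reals all_analysis.
From mathcomp Require Import ring lra.
Import Order.TTheory GRing.Theory Num.Theory numFieldNormedType.Exports.
Set Implicit Arguments. Unset Strict Implicit. Unset Printing Implicit Defensive.
Local Open Scope classical_set_scope.
Local Open Scope ring_scope.

(* With weights [w j = x j * xi j], the EFIM has trace [S = \sum_j w j] and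
   [4 * det = S^2 - |Z|^2], where [Z = \sum_j w j * exp (2 i phi j)]; hence
   [tr EFIM^-1 = 4 S / (S^2 - |Z|^2)].  This decreases when any [xi j] grows, so
   the worst case has [xi = xilo] and maximizes [|Z|] over the box of angles.
   The maximum over the box of the projection of [Z] on the direction
   [vartheta_m] is [h_m^T R x], which gives the lower bound.  Conversely [Z] is
   within angle [pi / M] of some [vartheta_m], so [|Z| cos (pi / M) <= h_m^T R x];
   the condition [M >= pi sqrt B] forces [g_m^T R x < 1^T R x], which makes the
   matching term of the upper bound finite and larger than [4 S / (S^2 - |Z|^2)]. *)

Lemma det_mx2 (R : comNzRingType) (A : 'M[R]_2) :
  \det A = A 0 0 * A 1 1 - A 0 1 * A 1 0.
Proof.
rewrite (expand_det_row _ 0) !big_ord_recl big_ord0 /cofactor !det_mx11 !mxE /=.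
have -> : lift (0 : 'I_2) (0 : 'I_1) = 1 by apply/val_inj.
have -> : lift (1 : 'I_2) (0 : 'I_1) = 0 by apply/val_inj.
by rewrite expr0 expr1 mul1r mulN1r mulrN addr0.
Qed.

Lemma mxtrace_adj_mx2 (R : comNzRingType) (A : 'M[R]_2) :
  \tr (\adj A) = A 0 0 + A 1 1.
Proof.
rewrite /mxtrace !big_ord_recl big_ord0 !mxE /cofactor !det_mx11 !mxE /=.
have -> : lift (0 : 'I_2) (0 : 'I_1) = 1 by apply/val_inj.
have -> : lift (1 : 'I_2) (0 : 'I_1) = 0 by apply/val_inj.
by rewrite /bump /= !addn0 expr0 sqrrN expr1n !mul1r addr0 addrC.
Qed.

Section Trigonometry.
Variable R : realType.

Lemma ler_norm_sin (u : R) : `|sin u| <= `|u|.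
Proof.
have sin_le (s : R) : 0 <= s -> `|sin s| <= s.
  move=> s0; have [c _] : exists2 c, c \in `[0, s]%R & sin s - sin 0 = cos c * (s - 0).
    by apply: MVT_segment => //; apply/continuous_subspaceT => e; exact: continuous_sin.
  by rewrite sin0 !subr0 => ->; rewrite normrM (ger0_norm s0) ler_piMl // cos_max.
have [u0|u0] := leP 0 u; first by rewrite (ger0_norm u0) sin_le.
by rewrite (ltr0_norm u0) -[sin u]opprK -sinN normrN sin_le // oppr_ge0 ltW.
Qed.

Lemma cos_ge_1_halfsqr (t : R) : 1 - t ^+ 2 / 2 <= cos t.
Proof.
have -> : t = (t / 2) *+ 2 by rewrite -mulr_natr divfK // pnatr_eq0.
rewrite cos_mulr2n cos2sin2.
have : sin (t / 2) ^+ 2 <= (t / 2) ^+ 2.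
  rewrite -real_normK ?num_real // -[(t / 2) ^+ 2]real_normK ?num_real //.
  by rewrite ler_sqr ?nnegrE // ler_norm_sin.
move=> h; rewrite -mulr_natr; nra.
Qed.

Lemma sqr_cos_sin_comb_le (a b v : R) :
  (a * cos v + b * sin v) ^+ 2 <= a ^+ 2 + b ^+ 2.
Proof.
have := cos2Dsin2 v; have := sqr_ge0 (a * sin v - b * cos v); nra.
Qed.

Lemma polar_coords (a b : R) : 0 < a ^+ 2 + b ^+ 2 ->
  let r := Num.sqrt (a ^+ 2 + b ^+ 2) in
  exists2 th, 0 <= th < pi *+ 2 & a = r * cos th /\ b = r * sin th.
Proof.
move=> q0 r; have r0 : 0 < r by rewrite sqrtr_gt0.
have r2 : r ^+ 2 = a ^+ 2 + b ^+ 2 by rewrite sqr_sqrtr // ltW.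
set c := a / r.
have ac : a = r * c by rewrite /c mulrC divfK // gt_eqF.
have c1 : -1 <= c <= 1.
  rewrite -ler_norml -(ler_pM2l r0) -(ger0_norm (ltW r0)) -normrM -ac mulr1.
  by rewrite (ger0_norm (ltW r0)) -sqrtr_sqr ler_sqrt ?addr_ge0 ?sqr_ge0 // lerDl sqr_ge0.
set t := acos c.
have ct : cos t = c by rewrite /t acosK // in_itv.
have st : r * sin t = `|b|.
  rewrite /t sin_acos // -(ger0_norm (ltW r0)) -sqrtr_sqr -sqrtrM ?sqr_ge0 //.
  by rewrite mulrBr mulr1 -exprMn -ac r2 addrC addKr sqrtr_sqr.
have /andP[t0 tpi] : 0 <= t <= pi by rewrite acos_ge0 // acos_lepi.
have pi0 := pi_gt0 R.
have [b0|b0] := leP 0 b.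
  exists t; first by rewrite t0 mulr2n; lra.
  by rewrite ct -ac st ger0_norm.
exists (pi *+ 2 - t).
  have : 0 < t.
    rewrite lt_neqAle t0 andbT; apply/eqP => tz.
    by move: st; rewrite -tz sin0 mulr0 => /esym/normr0_eq0 bz; rewrite bz in b0; lra.
  by rewrite mulr2n; lra.
rewrite cosB sinB cos2pi sin2pi ct !mul1r !mul0r addr0 sub0r mulrN st.
by rewrite ltr0_norm // opprK -ac.
Qed.

Lemma exists_vartheta_close (M : nat) (a b : R) : (0 < M)%N ->
  exists2 m, (m < M)%N &
  Num.sqrt (a ^+ 2 + b ^+ 2) * cos (pi / M%:R) <=
  a * cos (vartheta R M m) + b * sin (vartheta R M m).
Proof.
move=> M0.
have [qp|qz] := ltP 0 (a ^+ 2 + b ^+ 2); last first.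
  have az : a = 0 by apply/eqP; rewrite -sqrf_eq0; apply/eqP; nra.
  have bz : b = 0 by apply/eqP; rewrite -sqrf_eq0; apply/eqP; nra.
  by exists 0%N => //; rewrite az bz expr0n /= add0r sqrtr0 !mul0r add0r.
have [th /andP[th0 th2] [ea eb]] := polar_coords qp.
set r := Num.sqrt _ in ea eb *.
set K : R := M%:R.
have K1 : 1 <= K by rewrite /K ler1n.
have pi0 := pi_gt0 R.
have p2 : 0 < pi *+ 2 :> R by rewrite pmulrn_lgt0.
(* m is the index of the sector of width 2 pi / M containing th *)
set y := th * K / (pi *+ 2).
have y0 : 0 <= y by rewrite /y divr_ge0 // ?mulr_ge0 // ltW.
have /andP[hy1 hy2] := truncn_itv y0.
set m := Num.truncn y in hy1 hy2.
have hP1 : m%:R * (pi *+ 2) <= th * K by rewrite -ler_pdivlMr.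
have hP2 : th * K < (m%:R + 1) * (pi *+ 2).
  by rewrite -ltr_pdivrMr //; move: hy2; rewrite -natr1.
have mM : (m < M)%N.
  rewrite -(ltr_nat R) -/K -(ltr_pM2r p2).
  by apply: le_lt_trans hP1 _; rewrite mulrC ltr_pM2l //; lra.
exists m => //.
set v := vartheta R M m.
have Kv : K * v = (2 * m%:R + 1) * pi.
  by rewrite /v /vartheta -/K natrD natrM; field; rewrite /K pnatr_eq0 -lt0n.
have dab : `|th - v| <= pi / K.
  have Kp : 0 < K by lra.
  rewrite ler_pdivlMr // -(ger0_norm (ltW Kp)) -normrM mulrBl ler_norml.
  rewrite [v * K]mulrC Kv; rewrite mulr2n in hP1 hP2; apply/andP; split; nra.
have -> : a * cos v + b * sin v = r * cos (th - v) by rewrite cosB ea eb; ring.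
apply: ler_wpM2l; first exact: sqrtr_ge0.
have piK : pi / K <= pi by rewrite ler_pdivrMr; [nra|lra].
have d_itv : `|th - v| \in `[0, pi] by rewrite in_itv /= normr_ge0 (le_trans dab).
have piK_itv : pi / K \in `[0, pi] by rewrite in_itv /= piK andbT divr_ge0 //; lra.
by rewrite -[cos (th - v)]cos_norm leNgt ltr_cos // -leNgt.
Qed.

End Trigonometry.

Lemma ler_wpdiv2l (R : numFieldType) (c A B : R) :
  0 <= c -> 0 < B -> B <= A -> c / A <= c / B.
Proof.
move=> c0 B0 BA; apply: ler_wpM2l => //.
by rewrite lef_pV2 ?posrE // (lt_le_trans B0).
Qed.

Lemma disc_add_ineq (R : realFieldType) (S X Y T U V : R) :
  0 <= S -> 0 <= T -> U ^+ 2 + V ^+ 2 <= T ^+ 2 ->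
  (S + T) * (S ^+ 2 - X ^+ 2 - Y ^+ 2) <= S * ((S + T) ^+ 2 - (X + U) ^+ 2 - (Y + V) ^+ 2).
Proof.
move=> S0 T0 UV.
have cross : 2 * S * (X * U + Y * V) <= T * (S ^+ 2 + X ^+ 2 + Y ^+ 2).
  have [Tp|Tz] := ltP 0 T; last first.
    have T00 : T = 0 by apply/le_anti; rewrite T0 Tz.
    rewrite T00 expr0n /= in UV; rewrite T00.
    have -> : U = 0 by nra.
    have -> : V = 0 by nra.
    lra.
  rewrite -(ler_pM2l Tp).
  have : S ^+ 2 * (U ^+ 2 + V ^+ 2) <= S ^+ 2 * T ^+ 2 by rewrite ler_wpM2l ?sqr_ge0.
  have := sqr_ge0 (T * X - S * U); have := sqr_ge0 (T * Y - S * V); nra.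
have : S * (U ^+ 2 + V ^+ 2) <= S * T ^+ 2 by exact: ler_wpM2l.
nra.
Qed.

Section Moments.
Variables (R : realType) (n : nat).
Implicit Types (w d phi : 'I_n -> R).

(* For [w j = x j * xi j], [cmom] and [smom] encode the traceless part of
   [EFIM x phi xi], [4 * \det (EFIM x phi xi) = disc w phi] and
   [peb w phi = \tr (invmx (EFIM x phi xi))]. *)
Definition mass w := \sum_j w j.
Definition cmom w phi := \sum_j w j * cos (2 * phi j).
Definition smom w phi := \sum_j w j * sin (2 * phi j).
Definition disc w phi := mass w ^+ 2 - cmom w phi ^+ 2 - smom w phi ^+ 2.
Definition peb w phi := 4 * mass w / disc w phi.

Lemma EFIM_E (x phi xi : 'I_n -> R) i k :
  EFIM x phi xi i k = \sum_j x j * xi j * (uvec (phi j) i 0 * uvec (phi j) k 0).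
Proof. by rewrite /EFIM summxE; apply: eq_bigr => j _; rewrite !mxE big_ord1 !mxE. Qed.

Lemma trinv_EFIM (x phi xi : 'I_n -> R) (w := fun j => x j * xi j) :
  trinv (EFIM x phi xi) =
  if disc w phi == 0 then +oo%E else (peb w phi)%:E.
Proof.
set J := EFIM x phi xi.
have J00 : J 0 0 = \sum_j w j * cos (phi j) ^+ 2.
  by rewrite /J EFIM_E; apply: eq_bigr => j _; rewrite /w !mxE /= expr2.
have J11 : J 1 1 = \sum_j w j * sin (phi j) ^+ 2.
  by rewrite /J EFIM_E; apply: eq_bigr => j _; rewrite /w !mxE /= expr2.
have J01 : J 0 1 = \sum_j w j * (cos (phi j) * sin (phi j)).
  by rewrite /J EFIM_E; apply: eq_bigr => j _; rewrite /w !mxE.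
have J10 : J 1 0 = J 0 1.
  by rewrite J01 /J EFIM_E; apply: eq_bigr => j _; rewrite !mxE /= [sin _ * _]mulrC.
have mass_tr : mass w = J 0 0 + J 1 1.
  rewrite J00 J11 -big_split /=; apply: eq_bigr => j _.
  by rewrite -mulrDr cos2Dsin2 mulr1.
have cmomE : cmom w phi = J 0 0 - J 1 1.
  rewrite J00 J11 -sumrB; apply: eq_bigr => j _.
  by rewrite mulr_natl mulr2n cosD -mulrBr !expr2.
have smomE : smom w phi = 2 * J 0 1.
  rewrite J01 mulr_sumr; apply: eq_bigr => j _.
  by rewrite mulr_natl mulr2n sinD; ring.
have disc_det : disc w phi = 4 * \det J.
  by rewrite /disc det_mx2 mass_tr cmomE smomE J10; ring.
rewrite /trinv unitmxE unitfE disc_det mulf_eq0 pnatr_eq0 /=.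
case: ifPn => [detJ|]; last by rewrite negbK => ->.
rewrite (negPf detJ) /invmx unitmxE unitfE detJ mxtraceZ mxtrace_adj_mx2 /peb mass_tr disc_det.
by congr (_%:E); field.
Qed.

(* [disc w phi] is a sum of [w i * w k * (1 - cos (2 phi i - 2 phi k))]. *)
Lemma disc_ge0 w phi : (forall j, 0 <= w j) -> 0 <= disc w phi.
Proof.
move=> w0.
have sqr_sum f : (\sum_(i < n) f i) ^+ 2 = \sum_i \sum_k f i * f k :> R.
  by rewrite expr2 mulr_suml; apply: eq_bigr => i _; rewrite mulr_sumr.
rewrite /disc /mass /cmom /smom !sqr_sum -!sumrB.
apply: sumr_ge0 => i _; rewrite -!sumrB; apply: sumr_ge0 => k _.
have := cos_le1 (2 * phi i - 2 * phi k); rewrite cosB.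
have := mulr_ge0 (w0 i) (w0 k); nra.
Qed.

Lemma peb_add w d phi :
  (forall j, 0 <= d j) -> 0 < mass w -> 0 < disc w phi ->
  let wd := fun j => w j + d j in 0 < disc wd phi /\ peb wd phi <= peb w phi.
Proof.
move=> d0 Sp Dp wd.
have [massD cmomD smomD] : [/\ mass wd = mass w + mass d,
    cmom wd phi = cmom w phi + cmom d phi & smom wd phi = smom w phi + smom d phi].
  by split; rewrite -big_split; apply: eq_bigr => j _; rewrite ?mulrDl.
have T0 : 0 <= mass d by exact: sumr_ge0.
have UV : cmom d phi ^+ 2 + smom d phi ^+ 2 <= mass d ^+ 2.
  by have := disc_ge0 phi d0; rewrite /disc; lra.
have := disc_add_ineq (cmom w phi) (smom w phi) (ltW Sp) T0 UV.
rewrite /peb /disc massD cmomD smomD -/(disc w phi) => key.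
have Dwd : 0 < (mass w + mass d) ^+ 2 - (cmom w phi + cmom d phi) ^+ 2
                - (smom w phi + smom d phi) ^+ 2.
  by rewrite -(pmulr_rgt0 _ Sp); apply: lt_le_trans key; rewrite mulr_gt0 //; lra.
split => //; rewrite ler_pdivrMr // mulrAC ler_pdivlMr //; nra.
Qed.

Lemma sum_cos_sub w phi v :
  \sum_j w j * cos (2 * phi j - v) = cmom w phi * cos v + smom w phi * sin v.
Proof.
rewrite /cmom /smom !mulr_suml -big_split /=; apply: eq_bigr => j _.
by rewrite cosB; ring.
Qed.

End Moments.

Section SectorMaximum.
Variables (R : realType) (n M m : nat) (phihat phitil : 'I_n -> R).

Lemma cos_le_hm j p : phihat j - phitil j <= p <= phihat j + phitil j ->
  cos (2 * p - vartheta R M m) <= hm M m phihat phitil j.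
Proof.
move=> /andP[p1 p2]; apply: ub_le_sup.
  by exists 1 => _ [e _ <-]; exact: cos_le1.
exists (2 * (p - phihat j)); last by congr cos; ring.
by rewrite /= normrM ger0_norm // ler_wpM2l // ler_norml; apply/andP; split; lra.
Qed.

Lemma hm_attained j : 0 <= phitil j ->
  exists2 p, phihat j - phitil j <= p <= phihat j + phitil j &
  hm M m phihat phitil j = cos (2 * p - vartheta R M m).
Proof.
move=> phitil0.
have cos_cont : continuous (fun p : R => cos (2 * p - vartheta R M m)).
  move=> p; apply: continuous_comp; last exact: continuous_cos.
  by apply: cvgB; [apply: cvgM; [exact: cvg_cst|exact: cvg_id]|exact: cvg_cst].
have itv_ne : phihat j - phitil j <= phihat j + phitil j by lra.
have [c c_itv c_max] := EVT_max itv_ne (continuous_subspaceT cos_cont).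
rewrite in_itv /= in c_itv.
exists c => //; apply/le_anti; rewrite cos_le_hm // andbT.
apply: ge_sup.
  by exists (cos (2 * phihat j - vartheta R M m + 0)), 0; rewrite //= normr0 mulr_ge0.
move=> _ [e /= e_le <-].
rewrite (_ : _ + e = 2 * (phihat j + e / 2) - vartheta R M m); last by field.
apply: c_max; rewrite in_itv /=; move: e_le; rewrite ler_norml => /andP[e1 e2].
by apply/andP; split; lra.
Qed.

End SectorMaximum.

(* [S], [Q] and [P] play the roles of [1^T R x], [|Z|^2] at a worst angle and
   [P_R(x)]; [u] is [pi / M]. *)
Lemma sqrt_lt_mul_cos (R : realType) (S Q P u : R) :
  0 < S -> 0 <= Q < S ^+ 2 -> 4 * S <= P * (S ^+ 2 - Q) ->
  u ^+ 2 * (4^-1 * P * S) <= 1 -> Num.sqrt Q < S * cos u.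
Proof.
move=> S0 /andP[Q0 QS] PQ uB.
set q := Num.sqrt Q; have q0 : 0 <= q := sqrtr_ge0 Q.
have q2 : q ^+ 2 = Q by rewrite sqr_sqrtr.
have qS : q < S by nra.
have S2 : S ^+ 2 <= 4^-1 * P * S * (S ^+ 2 - Q) by nra.
have u2S : u ^+ 2 * S ^+ 2 <= S ^+ 2 - Q.
  have u20 := sqr_ge0 u.
  have : u ^+ 2 * S ^+ 2 <= u ^+ 2 * (4^-1 * P * S * (S ^+ 2 - Q)) by exact: ler_wpM2l.
  nra.
have := cos_ge_1_halfsqr u; nra.
Qed.

Section WorstCaseBounds.
Variables (R : realType) (n : nat) (phihat phitil xilo xihi x : 'I_n -> R) (M : nat).
Hypotheses (phitil_ge0 : forall j, 0 <= phitil j)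
  (xi_bounds : forall j, 0 <= xilo j <= xihi j) (x_ge0 : forall j, 0 <= x j)
  (PR_finite : (PR phihat phitil xilo xihi x < +oo)%E).

Let PRx := PR phihat phitil xilo xihi x.
Let phi_feasible (phi : 'I_n -> R) :=
  forall j, phihat j - phitil j <= phi j <= phihat j + phitil j.
Let xi_feasible (xi : 'I_n -> R) := forall j, xilo j <= xi j <= xihi j.
Let w j := x j * xilo j.
Let hsum m := \sum_j w j * hm M m phihat phitil j.

Let phihat_feasible : phi_feasible phihat.
Proof. by move=> j; apply/andP; split; have := phitil_ge0 j; lra. Qed.

Let xilo_feasible : xi_feasible xilo.
Proof. by move=> j; case/andP: (xi_bounds j) => _ ->; rewrite lexx. Qed.

Let w_ge0 j : 0 <= w j.
Proof. by rewrite mulr_ge0 //; case/andP: (xi_bounds j). Qed.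

Let oneRx_w : oneRx xilo x = mass w.
Proof. by apply: eq_bigr => j _; rewrite mulrC. Qed.

Lemma trinv_le_PR phi xi : phi_feasible phi -> xi_feasible xi ->
  (trinv (EFIM x phi xi) <= PRx)%E.
Proof. by move=> f1 f2; apply: ereal_sup_ubound; exists phi, xi. Qed.

Lemma disc_gt0 phi xi : phi_feasible phi -> xi_feasible xi ->
  0 < disc (fun j => x j * xi j) phi.
Proof.
move=> f1 f2; have := trinv_le_PR f1 f2; rewrite trinv_EFIM.
case: eqP => [_ oo_le|/eqP disc_neq0 _]; first by move: PR_finite; rewrite (le_gtF oo_le).
rewrite lt_neqAle eq_sym disc_neq0 disc_ge0 // => j.
rewrite mulr_ge0 //; case/andP: (xi_bounds j) => xilo0 _.
by case/andP: (f2 j) => + _; exact: le_trans.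
Qed.

Lemma mass_gt0 : 0 < mass w.
Proof.
have := disc_gt0 phihat_feasible xilo_feasible; rewrite -/w /disc.
have : 0 <= mass w by apply: sumr_ge0 => j _.
have := sqr_ge0 (cmom w phihat); have := sqr_ge0 (smom w phihat); nra.
Qed.

Lemma PR_fineK : PRx = (fine PRx)%:E.
Proof.
have := trinv_le_PR phihat_feasible xilo_feasible; rewrite trinv_EFIM.
rewrite gt_eqF ?disc_gt0 //; move: PR_finite.
by rewrite -/PRx; case: PRx.
Qed.

Lemma peb_le_PR phi : phi_feasible phi -> peb w phi <= fine PRx.
Proof.
move=> f1; rewrite -lee_fin -PR_fineK.
have := trinv_le_PR f1 xilo_feasible; rewrite trinv_EFIM.
by rewrite gt_eqF ?disc_gt0.
Qed.

(* The bound only decreases when the ranging coefficients grow. *)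
Lemma trinv_le_peb phi xi : phi_feasible phi -> xi_feasible xi ->
  (trinv (EFIM x phi xi) <= (peb w phi)%:E)%E.
Proof.
move=> f1 f2; pose d j := x j * (xi j - xilo j).
have d0 j : 0 <= d j by rewrite mulr_ge0 // subr_ge0; case/andP: (f2 j).
have wd : (fun j => x j * xi j) = (fun j => w j + d j).
  by apply/funext => j; rewrite /w /d; ring.
have [Dwd peb_le] := peb_add d0 mass_gt0 (disc_gt0 f1 xilo_feasible).
by rewrite trinv_EFIM wd gt_eqF.
Qed.

Lemma le_hsum phi m : phi_feasible phi ->
  cmom w phi * cos (vartheta R M m) + smom w phi * sin (vartheta R M m) <= hsum m.
Proof.
move=> f1; rewrite -sum_cos_sub; apply: ler_sum => j _.
by rewrite ler_wpM2l // cos_le_hm.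
Qed.

Lemma hsum_attained m : exists2 phi, phi_feasible phi &
  hsum m = cmom w phi * cos (vartheta R M m) + smom w phi * sin (vartheta R M m).
Proof.
have /choice[phi phiP] : forall j, exists p,
    phihat j - phitil j <= p <= phihat j + phitil j /\
    hm M m phihat phitil j = cos (2 * p - vartheta R M m).
  by move=> j; have [p ? ?] := hm_attained M m phihat (phitil_ge0 j); exists p.
exists phi; first by move=> j; case: (phiP j).
by rewrite -sum_cos_sub; apply: eq_bigr => j _; case: (phiP j) => _ ->.
Qed.

Lemma Pterm_E v :
  Pterm xilo x v = 4 * mass w / (mass w ^+ 2 - (\sum_j w j * v j) ^+ 2).
Proof.
rewrite /Pterm oneRx_w.
by congr (_ / (_ - _ ^+ 2)); apply: eq_bigr => j _; rewrite /w; ring.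
Qed.

Lemma Plow_le_PR : (Plow M phihat phitil xilo x <= PRx)%E.
Proof.
rewrite PR_fineK; apply: bigmax_le => [|m _]; first exact: leNye.
have [phi f1 hsumE] := hsum_attained m.
rewrite lee_fin Pterm_E -/(hsum m); apply: le_trans (peb_le_PR f1).
apply: ler_wpdiv2l; first by rewrite mulr_ge0 // ltW // mass_gt0.
  exact: disc_gt0 f1 xilo_feasible.
by rewrite /disc -addrA lerD2l -opprD lerN2 hsumE; exact: sqr_cos_sin_comb_le.
Qed.

Hypotheses (M_gt0 : (0 < M)%N)
  (M_large : pi * Num.sqrt (Bx phihat phitil xilo xihi x) <= M%:R).

Lemma hsum_lt_mass_cos m : `|hsum m| < mass w * cos (pi / M%:R).
Proof.
have [phi f1 hsumE] := hsum_attained m.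
set Q := cmom w phi ^+ 2 + smom w phi ^+ 2.
have discE : disc w phi = mass w ^+ 2 - Q by rewrite /disc opprD addrA.
have Dphi := disc_gt0 f1 xilo_feasible; rewrite discE in Dphi.
have PQ : 4 * mass w <= fine PRx * (mass w ^+ 2 - Q).
  by rewrite -ler_pdivrMr // -discE; exact: peb_le_PR f1.
have P0 : 0 < fine PRx.
  by rewrite -(pmulr_lgt0 _ Dphi); apply: lt_le_trans PQ; rewrite mulr_gt0 // mass_gt0.
have B0 : 0 <= 4^-1 * fine PRx * mass w by rewrite !mulr_ge0 ?invr_ge0 ?ltW ?mass_gt0.
have uB : (pi / M%:R) ^+ 2 * (4^-1 * fine PRx * mass w) <= 1.
  have K0 : 0 < M%:R :> R by rewrite ltr0n.
  rewrite -(sqr_sqrtr B0) -exprMn mulrAC.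
  rewrite expr_le1 ?divr_ge0 ?mulr_ge0 ?sqrtr_ge0 ?pi_ge0 ?(ltW K0) //.
  by rewrite ler_pdivrMr // mul1r; move: M_large; rewrite /Bx -/PRx oneRx_w.
apply: le_lt_trans (sqrt_lt_mul_cos mass_gt0 _ PQ uB).
  by rewrite -sqrtr_sqr ler_sqrt ?addr_ge0 ?sqr_ge0 // hsumE; exact: sqr_cos_sin_comb_le.
by rewrite addr_ge0 ?sqr_ge0 //= -subr_gt0.
Qed.

Lemma PR_le_Pup : (PRx <= Pup M phihat phitil xilo x)%E.
Proof.
apply: ge_ereal_sup => _ [phi [xi [f1 [f2 ->]]]].
apply: le_trans (trinv_le_peb f1 f2) _.
have [m mM close] := exists_vartheta_close (cmom w phi) (smom w phi) M_gt0.
pose Fg (i : 'I_M) := (Pterm xilo x (gm M i phihat phitil))%:E.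
apply: le_trans _ (le_bigmax -oo%E Fg (Ordinal mM)).
rewrite /Fg lee_fin Pterm_E /=.
set c := cos (pi / M%:R) in close *.
set rho := Num.sqrt _ in close.
have hlt := hsum_lt_mass_cos m.
have c0 : 0 < c.
  by rewrite -(pmulr_rgt0 _ mass_gt0); exact: le_lt_trans (normr_ge0 _) hlt.
have -> : \sum_j w j * gm M m phihat phitil j = hsum m / c.
  by rewrite mulr_suml; apply: eq_bigr => j _; rewrite /gm mulrA.
have rhoG : rho <= hsum m / c.
  by rewrite ler_pdivlMr //; apply: le_trans close (le_hsum m f1).
have GS : hsum m / c < mass w.
  by rewrite ltr_pdivrMr //; apply: le_lt_trans (ler_norm _) hlt.
have rho0 : 0 <= rho := sqrtr_ge0 _.
have rho2 : rho ^+ 2 = cmom w phi ^+ 2 + smom w phi ^+ 2.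
  by rewrite sqr_sqrtr // addr_ge0 ?sqr_ge0.
rewrite /peb; apply: ler_wpdiv2l.
- by rewrite mulr_ge0 // ltW // mass_gt0.
- by rewrite subr_gt0; nra.
- by rewrite /disc; nra.
Qed.

End WorstCaseBounds.

Theorem proposition4 (R : realType) (n : nat) (phihat phitil xilo xihi : 'I_n -> R)
  (x : 'I_n -> R) (M : nat) :
  (1 <= n)%N ->
  (forall j, 0 <= phitil j) ->
  (forall j, 0 <= xilo j <= xihi j) ->
  (forall j, 0 <= x j) ->
  (PR phihat phitil xilo xihi x < +oo)%E ->
  (0 < M)%N ->
  pi * Num.sqrt (Bx phihat phitil xilo xihi x) <= M%:R ->
  (Plow M phihat phitil xilo x <= PR phihat phitil xilo xihi x <= Pup M phihat phitil xilo x)%E.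
Proof.
move=> _ phitil0 xi_bounds x0 PR_finite M0 M_large.
by rewrite Plow_le_PR // PR_le_Pup.
Qed.
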